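(* Let $p \ge 1$ be an integer, let $u_L \neq u_R$ be real numbers, let $c \neq 0$ be a real constant, and let $S:\mathbb{R}\to\mathbb{R}$ be a measurable function. For each grid spacing $h>0$ define the width $w_h = c\,h^{p/(p+1)}$ and the profile $$u_h(z) = \frac{u_L+u_R}{2} + \frac{u_R-u_L}{2}\, S\!\left(\frac{z}{w_h}\right), \qquad z \in \mathbb{R}.$$ For $\rho>0$ set $I(\rho) = \int_{-\infty}^{\infty} \left| S(\chi) - S(\rho\chi)\right|\,d\chi$. Let $h_1>0$ and $0<r<1$, and set $h_2 = r h_1$, $h_3 = r^2 h_1$. Assume $0 < I(r^{-p/(p+1)}) < \infty$. Then, with $\|\cdot\|$ the $L_1(\mathbb{R})$ norm, $$\frac{\|u_{h_1}-u_{h_2}\|}{\|u_{h_2}-u_{h_3}\|} = \left(\frac{h_1}{h_2}\right)^{p/(p+1)} = r^{-p/(p+1)},$$ and consequently $\sigma = p/(p+1)$ is the unique real $\sigma \neq 0$ satisfying $$\frac{\|u_{h_1}-u_{h_2}\|}{\|u_{h_2}-u_{h_3}\|} = \frac{|h_1^\sigma - h_2^\sigma|}{|h_2^\sigma - h_3^\sigma|}.$$ That is, the Richardson-extrapolation convergence-rate estimate $\mathcal{R}(u_{h_1},u_{rh_1},u_{r^2h_1})$ equals $p/(p+1)$, independently of the profile $S$.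
   Context: Setting: linear advection $u_t + a u_x = 0$ with jump initial data ($u=u_L$ for $x<0$, $u=u_R$ for $x\ge 0$), approximated by a (noncompressive, stable) $p$-th order scheme with grid spacing $h$. The scheme's modified equation, truncated and written in the moving frame $z = x - at$, is $U_\tau - \kappa_h U_{zzz\cdots}=0$ (a $(p+1)$-st $z$-derivative) with $\kappa_h = \tilde\kappa h^p$, whose solution at the final time $t_f$ is self-similar in $\xi_h = z/(\kappa_h t_f)^{1/(p+1)}$; this gives the form $u_h(z)=\frac{u_L+u_R}{2}+\frac{u_R-u_L}{2}S(\xi_h)$ with $w_h=(\tilde\kappa t_f)^{1/(p+1)} h^{p/(p+1)}$ (real $(p+1)$-th root), which is taken as the model of the numerical solution at resolution $h$. Richardson convergence-rate estimate: for three approximations $u_{h_1},u_{h_2},u_{h_3}$, $\mathcal{R}(u_{h_1},u_{h_2},u_{h_3})$ denotes the solution $\sigma$ of $\frac{\|u_{h_1}-u_{h_2}\|}{\|u_{h_2}-u_{h_3}\|} = \frac{|h_1^\sigma-h_2^\sigma|}{|h_2^\sigma-h_3^\sigma|}$, where $\|\cdot\|$ is the $L_1$ norm. *)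

From HB Require Import structures.
From mathcomp Require Import all_boot all_order all_algebra.
From mathcomp Require Import all_classical all_reals all_analysis.
Set Implicit Arguments. Unset Strict Implicit. Unset Printing Implicit Defensive.
Import Order.TTheory GRing.Theory Num.Theory.
Import numFieldNormedType.Exports.
Local Open Scope classical_set_scope.
Local Open Scope ring_scope.

Definition rate {R : realType} (p : nat) : R := p%:R / p.+1%:R.

Definition width {R : realType} (p : nat) (c h : R) : R := c * h `^ rate p.

Definition uh {R : realType} (p : nat) (uL uR c : R) (S : R -> R) (h z : R) : R :=
  (uL + uR) / 2 + (uR - uL) / 2 * S (z / width p c h).

Definition L1dist {R : realType} (f g : R -> R) : \bar R :=
  (\int[@lebesgue_measure R]_(x in [set: R]) (`|f x - g x|)%:E)%E.

Definition Iprof {R : realType} (S : R -> R) (rho : R) : \bar R :=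
  (\int[@lebesgue_measure R]_(x in [set: R]) (`|S x - S (rho * x)|)%:E)%E.

From HB Require Import structures.
From mathcomp Require Import all_boot all_order all_algebra.
From mathcomp Require Import all_classical all_reals all_analysis.
From mathcomp Require Import ring lra measurable_realfun.
Import Order.TTheory GRing.Theory Num.Theory.
Import numFieldNormedType.Exports.
Local Open Scope classical_set_scope.
Local Open Scope ring_scope.

(* Passing from h to r h scales the width w_h by r^(p/(p+1)). In the variable
   chi = z / w_h, u_h - u_(r h) is (u_R - u_L)/2 (S chi - S (r^(-p/(p+1)) chi)),
   so dilating Lebesgue measure gives
   ||u_h - u_(r h)|| = |u_R - u_L|/2 |w_h| I(r^(-p/(p+1))).
   The two norms for h1, r h1, r^2 h1 are therefore in the ratio of the widths,
   r^(-p/(p+1)), while on this geometric grid the Richardson quotient of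
   h^sigma is r^(-sigma), which is injective in sigma since r <> 1. *)

Section lebesgue_dilation.
Context {R : realType} (w : R).
Hypothesis w_neq0 : w != 0.

Let divw : measurableTypeR R -> measurableTypeR R := fun x => x / w.

Let measurable_divw : measurable_fun [set: measurableTypeR R] divw.
Proof. exact: mulrr_measurable. Qed.

Lemma lebesgue_measure_preimage_divr_itv (a b : R) :
  (lebesgue_measure (divw @^-1` `]a, b]) = `|w|%:E * lebesgue_measure `]a, b])%E.
Proof.
rewrite lebesgue_measure_itv /=.
have [w_gt0|w_le0] := ltP 0 w.
  have -> : divw @^-1` `]a, b] = `]a * w, b * w]%classic.
    by apply/seteqP; split => x /=; rewrite !in_itv /= ltr_pdivlMr // ler_pdivrMr.
  rewrite lebesgue_measure_itv /= !lte_fin ltr_pM2r // gtr0_norm //.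
  by case: ifP => _; rewrite ?mule0 // -!EFinD -EFinM; congr (_%:E); lra.
have w_lt0 : w < 0 by rewrite lt_neqAle w_neq0.
have -> : divw @^-1` `]a, b] = `[b * w, a * w[%classic.
  apply/seteqP; split => x /=; rewrite !in_itv /= ltr_ndivlMr // ler_ndivrMr //.
    by case/andP => -> ->.
  by case/andP => -> ->.
rewrite lebesgue_measure_itv /= !lte_fin ltr_nM2r // ltr0_norm //.
by case: ifP => _; rewrite ?mule0 // -!EFinD -EFinM; congr (_%:E); lra.
Qed.

Lemma lebesgue_measure_preimage_divr (A : set (measurableTypeR R)) :
  measurable A ->
  (lebesgue_measure (divw @^-1` A) = `|w|%:E * lebesgue_measure A)%E.
Proof.
have w_gt0 : 0 < `|w| by rewrite normr_gt0.
have := @lebesgue_measure_unique R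
  (mscale (`|w|^-1)%:nng (pushforward lebesgue_measure divw)).
move=> /(_ _ measurable_divw) lebesgue_rescaled mA.
rewrite [in RHS]lebesgue_rescaled //= /mscale /pushforward /=.
  by rewrite muleA -EFinM mulfV ?mul1e ?gt_eqF.
move=> _ [[a b] _ <-]; rewrite /mscale /pushforward /=.
by rewrite lebesgue_measure_preimage_divr_itv muleA -EFinM mulVf ?mul1e ?gt_eqF.
Qed.

Lemma ge0_integral_divr (g : R -> R) :
  measurable_fun [set: R] g -> (forall x, 0 <= g x) ->
  (\int[lebesgue_measure]_(x in [set: R]) (g (x / w))%:E =
   `|w|%:E * \int[lebesgue_measure]_(x in [set: R]) (g x)%:E)%E.
Proof.
move=> mg g_ge0.
have mEg : measurable_fun [set: R] (EFin \o g) by exact/measurable_EFinP.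
have Eg_ge0 x : [set: R] x -> (0 <= (g x)%:E)%E by rewrite lee_fin.
transitivity (\int[pushforward lebesgue_measure divw]_(x in [set: R]) (g x)%:E)%E.
  by rewrite (ge0_integral_pushforward measurable_divw) // => y _; exact: Eg_ge0.
rewrite -[RHS](ge0_integral_mscale _ _ (`|w|)%:nng) //.
apply: eq_measure_integral => A mA _ /=.
exact: lebesgue_measure_preimage_divr.
Qed.

End lebesgue_dilation.

Lemma widthMr {R : realType} (p : nat) (c r h : R) : 0 <= r -> 0 <= h ->
  width p c (r * h) = r `^ rate p * width p c h.
Proof. by move=> r_ge0 h_ge0; rewrite /width powRM // mulrCA. Qed.

Lemma width_neq0 {R : realType} (p : nat) (c h : R) :
  c != 0 -> 0 < h -> width p c h != 0.
Proof. by move=> c_neq0 h_gt0; rewrite mulf_neq0 // gt_eqF // powR_gt0. Qed.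

Lemma uhB_dilation {R : realType} (p : nat) (uL uR c : R) (S : R -> R)
    (r h x : R) : 0 < r -> 0 < h ->
  let chi := x / width p c h in
  uh p uL uR c S h x - uh p uL uR c S (r * h) x =
  (uR - uL) / 2 * (S chi - S (r `^ (- rate p) * chi)).
Proof.
move=> r_gt0 h_gt0 chi; rewrite /uh -/chi.
have -> : x / width p c (r * h) = r `^ (- rate p) * chi.
  by rewrite widthMr ?ltW // invfM powRN mulrCA.
ring.
Qed.

Lemma L1dist_uh_dilation {R : realType} (p : nat) (uL uR c : R) (S : R -> R)
    (r h : R) : measurable_fun [set: R] S -> c != 0 -> 0 < r -> 0 < h ->
  L1dist (uh p uL uR c S h) (uh p uL uR c S (r * h)) =
  ((`|(uR - uL) / 2| * `|width p c h|)%:E * Iprof S (r `^ (- rate p)))%E.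
Proof.
move=> mS c_neq0 r_gt0 h_gt0.
set w := width p c h; set rho := r `^ (- rate p).
have w_neq0 : w != 0 by exact: width_neq0.
pose g x := `|S x - S (rho * x)|.
have mg : measurable_fun [set: R] g.
  apply: measurableT_comp => //; apply: measurable_funB => //.
  by apply: measurableT_comp => //; exact: mulrl_measurable.
have mgw : measurable_fun [set: R] (fun x => (g (x / w))%:E).
  by apply/measurable_EFinP; apply: measurableT_comp => //; exact: mulrr_measurable.
transitivity (\int[lebesgue_measure]_(x in [set: R])
                (`|(uR - uL) / 2|%:E * (g (x / w))%:E))%E.
  by apply: eq_integral => x _; rewrite uhB_dilation // normrM EFinM.
have g_ge0 x : 0 <= g x by exact: normr_ge0.
rewrite ge0_integralZl_EFin // => [|x _]; last by rewrite lee_fin.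
by rewrite ge0_integral_divr // muleA -EFinM.
Qed.

Lemma richardson_ratio_geometric {R : realType} (h r sigma : R) :
  0 < h -> 0 < r -> r != 1 -> sigma != 0 ->
  `|h `^ sigma - (r * h) `^ sigma| / `|(r * h) `^ sigma - (r ^+ 2 * h) `^ sigma|
  = r `^ (- sigma).
Proof.
move=> h_gt0 r_gt0 r_neq1 sigma_neq0.
have -> : r ^+ 2 * h = r * (r * h) by rewrite mulrA -expr2.
rewrite !powRM ?mulr_ge0 ?ltW // powRN.
set q := r `^ sigma; set H := h `^ sigma.
have q_gt0 : 0 < q by rewrite powR_gt0.
have H_gt0 : 0 < H by rewrite powR_gt0.
have q_neq1 : `|1 - q| != 0.
  by rewrite normr_eq0 subr_eq0 eq_sym powR_eq1 negb_or negb_or r_neq1 -leNgt ltW.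
have -> : H - q * H = H * (1 - q) by ring.
have -> : q * H - q * (q * H) = q * H * (1 - q) by ring.
rewrite !normrM (gtr0_norm q_gt0) (gtr0_norm H_gt0).
by field; rewrite q_neq1 (gt_eqF q_gt0) (gt_eqF H_gt0).
Qed.

Lemma powR_exponent_inj {R : realType} (r : R) : 0 < r -> r != 1 ->
  injective (powR r).
Proof.
move=> r_gt0 r_neq1 s t /(congr1 (@ln R)); rewrite !ln_powR => /mulIf; apply.
by rewrite ln_eq0.
Qed.

Theorem mainTheorem1 (R : realType) (p : nat) (uL uR c : R) (S : R -> R)
    (h1 r : R) :
  (1 <= p)%N -> uL != uR -> c != 0 -> measurable_fun [set: R] S ->
  0 < h1 -> 0 < r -> r < 1 ->
  (0 < Iprof S (r `^ (- rate p)))%E -> (Iprof S (r `^ (- rate p)) < +oo)%E ->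
  let h2 := r * h1 in
  let h3 := r ^+ 2 * h1 in
  let N1 := L1dist (uh p uL uR c S h1) (uh p uL uR c S h2) in
  let N2 := L1dist (uh p uL uR c S h2) (uh p uL uR c S h3) in
  [/\ (0 < N1 < +oo)%E, (0 < N2 < +oo)%E,
      fine N1 / fine N2 = (h1 / h2) `^ rate p,
      fine N1 / fine N2 = r `^ (- rate p) &
      forall sigma : R, sigma != 0 ->
        (fine N1 / fine N2
           = `|h1 `^ sigma - h2 `^ sigma| / `|h2 `^ sigma - h3 `^ sigma|
         <-> sigma = rate p)].
Proof.
move=> _ uLR c_neq0 mS h1_gt0 r_gt0 r_lt1 I_gt0 I_lty h2 h3 N1 N2.
have r_neq1 : r != 1 by rewrite lt_eqF.
set I := Iprof S _ in I_gt0 I_lty.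
have I_fin : I \is a fin_num by rewrite ge0_fin_numE // ltW.
set i := fine I; have I_E : i%:E = I by rewrite fineK.
have i_gt0 : 0 < i by rewrite -lte_fin I_E.
set K := `|(uR - uL) / 2|.
have K_gt0 : 0 < K by rewrite normr_gt0 mulf_neq0 // subr_eq0 eq_sym.
set W := `|width p c h1|.
have W_gt0 : 0 < W by rewrite normr_gt0 width_neq0.
have rW_gt0 : 0 < r `^ rate p by rewrite powR_gt0.
have -> : N1 = (K * W * i)%:E.
  by rewrite /N1 L1dist_uh_dilation // -/I -I_E -EFinM.
have -> : N2 = (K * (r `^ rate p * W) * i)%:E.
  rewrite /N2 /h3 expr2 -mulrA L1dist_uh_dilation ?mulr_gt0 // -/I -I_E.
  by rewrite widthMr ?ltW // (normrM (r `^ rate p)) (gtr0_norm rW_gt0) -EFinM.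
have ratio : K * W * i / (K * (r `^ rate p * W) * i) = r `^ (- rate p).
  by rewrite powRN; field; rewrite !gt_eqF.
split => //=; rewrite ?ratio.
- by rewrite lte_fin ltry !mulr_gt0.
- by rewrite lte_fin ltry !mulr_gt0.
- by rewrite /h2 invfM mulrCA mulfV ?gt_eqF // mulr1 -powR_inv1 ?ltW // -powRrM mulN1r.
move=> sigma sigma_neq0; rewrite richardson_ratio_geometric //.
by split => [/(powR_exponent_inj _ r_gt0 r_neq1)/oppr_inj|->].
Qed.
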